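(* Consider Gaussian linear regression models for a response vector $Y=(Y_1,\dots,Y_n)$: model $M_\ell$ states $Y\sim N_n(X_\ell\beta_\ell,\sigma_\ell^2 I_n)$, where $X_\ell$ is an $n\times d_\ell$ full-rank design matrix. Let $M_0$ (with design matrix $X_0$ of dimension $d_0$) be a reference model nested in every model of the model space $\mathcal M$. For observed data $y$ let $RSS_\ell = y^T\big[I_n - X_\ell(X_\ell^TX_\ell)^{-1}X_\ell^T\big]y$ be the residual sum of squares of $M_\ell$, and define the J-PEP Bayes factor of $M_\ell$ versus $M_0$ by $$BF^{J\text{-}PEP}_{\ell 0} = 2\,\frac{\Gamma(n-d_\ell)}{\Gamma\!\left(\frac{n-d_\ell}{2}\right)^2}\int_0^{\pi/2}\frac{(\sin\phi)^{n-d_0-1}(\cos\phi)^{n-d_\ell-1}(n+\sin^2\phi)^{\frac{n-d_\ell}{2}}}{\left(n\frac{RSS_\ell}{RSS_0}+\sin^2\phi\right)^{\frac{n-d_0}{2}}}\,d\phi,$$ and for two models $M_\ell,M_k$ set $BF^{J\text{-}PEP}_{\ell k}=BF^{J\text{-}PEP}_{\ell 0}/BF^{J\text{-}PEP}_{k 0}$. Then for any two models $M_\ell, M_k\in\mathcal M\setminus\{M_0\}$ and for large $n$, $$-2\log BF^{J\text{-}PEP}_{\ell k}\approx n\log\frac{RSS_\ell}{RSS_k}+(d_\ell-d_k)\log n = BIC_\ell - BIC_k,$$ where $BIC_m = n\log RSS_m + d_m\log n$ (up to an additive constant common to all models).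
   Context: The J-PEP Bayes factor is the Bayes factor obtained from the power-expected-posterior prior with independence Jeffreys baseline prior $\pi^N_\ell(\beta_\ell,\sigma_\ell^2)\propto 1/\sigma_\ell^2$, power parameter $\delta$ equal to the imaginary sample size $n^*$, and $n^*=n$; under these choices it reduces to the displayed integral formula, which may be taken as its definition. $\Gamma$ is the Gamma function. *)

From Stdlib Require Import Reals.
From Coquelicot Require Import Coquelicot.
Open Scope R_scope.

Definition Gamma (x : R) : R :=
  RInt_gen (fun t => Rpower t (x - 1) * exp (- t))
           (at_right 0) (Rbar_locally p_infty).

Definition BF_JPEP_0 (n d0 dl : nat) (rss0 rssl : R) : R :=
  2 * Gamma (INR n - INR dl) / (Gamma ((INR n - INR dl) / 2)) ^ 2 *
  RInt (fun phi =>
          (sin phi) ^ (n - d0 - 1) * (cos phi) ^ (n - dl - 1) *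
          Rpower (INR n + (sin phi) ^ 2) ((INR n - INR dl) / 2) /
          Rpower (INR n * (rssl / rss0) + (sin phi) ^ 2) ((INR n - INR d0) / 2))
       0 (PI / 2).

Definition BF_JPEP (n d0 dl dk : nat) (rss0 rssl rssk : R) : R :=
  BF_JPEP_0 n d0 dl rss0 rssl / BF_JPEP_0 n d0 dk rss0 rssk.

Definition BIC (n dm : nat) (rssm : R) : R := INR n * ln rssm + INR dm * ln (INR n).

From Stdlib Require Import Reals Lra Lia Classical.
From Coquelicot Require Import Coquelicot.
Open Scope R_scope.

(* Write k = n - d - 1 and a = d - d0 for a model of dimension d.  On [0, PI/2] the
   factor (n + sin^2)^((n-d)/2) / (n r + sin^2)^((n-d0)/2), with r = RSS/RSS_0 in [c, 1],
   equals n^((n-d)/2) (n r)^(-(n-d0)/2) up to factors in [exp (-1/(2c)), exp (1/2)],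
   since (A + s)^e <= A^e exp (e s / A) and e/A stays bounded.  What is left is the Wallis
   integral of sin^(k+a) cos^k, which lies between 2^-a and 1 times that of sin^k cos^k,
   and Gamma(k+1) / Gamma((k+1)/2)^2 times the latter is 2-periodic in k, so it takes only
   two positive values.  Hence
     log BF_d0 = - (d - d0)/2 log n - (n - d0)/2 log r + O(1),
   and the difference of two such expansions is the BIC difference up to
   d0 log (RSS_l / RSS_k), which is bounded by - d0 log c. *)

Lemma exp_le x y : x <= y -> exp x <= exp y.
Proof.
  intros [Hlt | ->]; [now apply Rlt_le, exp_increasing | apply Rle_refl].
Qed.

Lemma filter_prod_pos (P : R -> R -> Prop) :
  (forall a b, 0 < a -> 0 < b -> P a b) ->
  filter_prod (at_right 0) (Rbar_locally p_infty) (fun ab => P (fst ab) (snd ab)).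
Proof.
  intros HP. apply (Filter_prod _ _ _ (fun a => 0 < a) (fun b => 0 < b)); [| | exact HP].
  - now exists (mkposreal 1 Rlt_0_1).
  - now exists 0.
Qed.

Lemma pos_of_Rmin_le a b t : 0 < a -> 0 < b -> Rmin a b <= t -> 0 < t.
Proof. intros Ha Hb H. apply Rlt_le_trans with (2 := H). now apply Rmin_glb_lt. Qed.

Lemma ex_RInt_continuous_pos (f : R -> R) a b :
  (forall t, 0 < t -> continuous f t) -> 0 < a -> 0 < b -> ex_RInt f a b.
Proof.
  intros Hf Ha Hb. apply (ex_RInt_continuous (V := R_CompleteNormedModule)).
  intros t [Ht _]. apply Hf. now apply (pos_of_Rmin_le a b).
Qed.

(* The improper integral is the supremum of the integrals over compact subintervals. *)
Lemma is_RInt_gen_nonneg_bounded (f : R -> R) (B : R) :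
  (forall t, 0 < t -> continuous f t) -> (forall t, 0 < t -> 0 <= f t) ->
  (forall a b, 0 < a -> a <= b -> RInt f a b <= B) ->
  exists l, is_RInt_gen f (at_right 0) (Rbar_locally p_infty) l /\
            forall a b, 0 < a -> a <= b -> RInt f a b <= l.
Proof.
  intros Hc Hpos HB.
  set (E := fun y : R => exists a b, 0 < a /\ a <= b /\ y = RInt f a b).
  assert (HEb : bound E) by (exists B; intros y (a & b & Ha & Hab & ->); auto).
  assert (HEn : exists y, E y) by (exists (RInt f 1 1), 1, 1; repeat split; lra).
  destruct (completeness E HEb HEn) as [l [Hub Hlub]].
  assert (Hle : forall a b, 0 < a -> a <= b -> RInt f a b <= l)
    by (intros a b Ha Hab; apply Hub; now exists a, b).
  assert (Hge : forall a b, 0 < a -> a <= b -> 0 <= RInt f a b).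
  { intros a b Ha Hab. apply RInt_ge_0; auto.
    - apply ex_RInt_continuous_pos; auto; lra.
    - intros x Hx. apply Hpos. lra. }
  assert (Hchasles : forall a b c, 0 < a -> 0 < b -> 0 < c ->
            RInt f a c = RInt f a b + RInt f b c).
  { intros a b c Ha Hb Hc'. symmetry.
    apply (RInt_Chasles f a b c); apply ex_RInt_continuous_pos; auto. }
  exists l. split; [| exact Hle].
  apply (filterlimi_lim_ext_loc (fun ab => RInt f (fst ab) (snd ab))).
  { apply (filter_prod_pos (fun a b => is_RInt f a b (RInt f a b))). intros a b Ha Hb.
    exact (RInt_correct f a b (ex_RInt_continuous_pos f a b Hc Ha Hb)). }
  apply filterlim_locally. intros eps.
  destruct (classic (exists y, E y /\ l - eps < y))
    as [[y [(a0 & b0 & Ha0 & Hab0 & ->) Hy]] | Hn].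
  - exists (fun a => 0 < a < a0) (fun b => b0 < b).
    + exists (mkposreal a0 Ha0). intros t Ht Htpos.
      apply Rabs_lt_between' in Ht. simpl in Ht. lra.
    + now exists b0.
    + intros a b Ha Hb. simpl. change (Rabs (RInt f a b - l) < eps).
      assert (Hab : RInt f a b <= l) by (apply Hle; lra).
      rewrite (Hchasles a a0 b), (Hchasles a0 b0 b) in Hab |- * by lra.
      assert (0 <= RInt f a a0) by (apply Hge; lra).
      assert (0 <= RInt f b0 b) by (apply Hge; lra).
      apply Rabs_lt_between'. lra.
  - exfalso.
    assert (Hu : is_upper_bound E (l - eps)).
    { intros y Hy. apply Rnot_lt_le. intros Hlt. apply Hn. now exists y. }
    specialize (Hlub _ Hu). destruct eps; simpl in *; lra.
Qed.

Definition Gamma_integrand (x t : R) : R := Rpower t (x - 1) * exp (- t).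

Definition Gamma_spec (x : R) : Prop :=
  is_RInt_gen (Gamma_integrand x) (at_right 0) (Rbar_locally p_infty) (Gamma x) /\
  0 < Gamma x.

Lemma Gamma_spec_intro x l :
  is_RInt_gen (Gamma_integrand x) (at_right 0) (Rbar_locally p_infty) l -> 0 < l ->
  Gamma_spec x.
Proof.
  intros Hl Hpos.
  assert (HG : Gamma x = l) by exact (is_RInt_gen_unique _ _ Hl).
  unfold Gamma_spec. now rewrite HG.
Qed.

Lemma ex_derive_Rpower_l (e t : R) : 0 < t -> ex_derive (fun u => Rpower u e) t.
Proof.
  intros Ht. exists (e * Rpower t (e - 1)).
  now apply is_derive_Reals, derivable_pt_lim_power.
Qed.

Lemma Gamma_integrand_continuous x t : 0 < t -> continuous (Gamma_integrand x) t.
Proof.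
  intros Ht. apply (ex_derive_continuous (Gamma_integrand x)). unfold Gamma_integrand. auto_derive.
  now apply ex_derive_Rpower_l.
Qed.

Lemma Gamma_integrand_pos x t : 0 < Gamma_integrand x t.
Proof. apply Rmult_lt_0_compat; [apply exp_pos | apply exp_pos]. Qed.

Lemma Gamma_integrand_ge x t : x <= 1 -> 0 < t <= 1 -> exp (-1) <= Gamma_integrand x t.
Proof.
  intros Hx Ht. unfold Gamma_integrand, Rpower.
  rewrite <- exp_plus. apply exp_le.
  assert (ln t <= 0) by (rewrite <- ln_1; apply ln_le; lra).
  nra.
Qed.

Lemma Gamma_spec_of_bounded x B : x <= 1 ->
  (forall a b, 0 < a -> a <= b -> RInt (Gamma_integrand x) a b <= B) ->
  Gamma_spec x.
Proof.
  intros Hx HB.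
  destruct (is_RInt_gen_nonneg_bounded (Gamma_integrand x) B) as [l [Hl Hsup]].
  - apply Gamma_integrand_continuous.
  - intros t _. apply Rlt_le, Gamma_integrand_pos.
  - exact HB.
  - apply (Gamma_spec_intro x l Hl).
    assert (Hint : RInt (fun _ => exp (-1)) (1/2) 1 <= RInt (Gamma_integrand x) (1/2) 1).
    { apply RInt_le; [lra | apply ex_RInt_const | |].
      - apply ex_RInt_continuous_pos; [apply Gamma_integrand_continuous | lra | lra].
      - intros t Ht. apply Gamma_integrand_ge; lra. }
    rewrite RInt_const in Hint.
    assert (0 < exp (-1)) by apply exp_pos.
    specialize (Hsup (1/2) 1 ltac:(lra) ltac:(lra)).
    unfold scal in Hint; simpl in Hint; unfold mult in Hint; simpl in Hint. lra.
Qed.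

Lemma Gamma_spec_1 : Gamma_spec 1.
Proof.
  apply (Gamma_spec_of_bounded 1 1 (Rle_refl 1)). intros a b Ha Hab.
  assert (His : is_RInt (Gamma_integrand 1) a b (minus (- exp (- b)) (- exp (- a)))).
  { apply (is_RInt_derive (fun t => - exp (- t))).
    - intros t _. unfold Gamma_integrand. auto_derive; [easy|].
      rewrite Rminus_diag. unfold Rpower. rewrite Rmult_0_l, exp_0. ring.
    - intros t Ht. apply Gamma_integrand_continuous.
      apply (pos_of_Rmin_le a b); lra. }
  rewrite (is_RInt_unique _ _ _ _ His). unfold minus, plus, opp; simpl.
  assert (0 < exp (- b)) by apply exp_pos.
  assert (exp (- a) <= 1) by (rewrite <- exp_0; apply exp_le; lra).
  lra.
Qed.

(* [Gamma_integrand (1/2) t <= 1 / (sqrt t (1 + t))], whose primitive is [2 atan (sqrt t)]. *)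
Lemma Gamma_spec_half : Gamma_spec (1/2).
Proof.
  set (g := fun t : R => / (sqrt t * (1 + t))).
  assert (Hle : forall t, 0 < t -> Gamma_integrand (1/2) t <= g t).
  { intros t Ht. unfold Gamma_integrand, g.
    replace (1/2 - 1) with (- (/ 2)) by field.
    rewrite Rpower_Ropp, Rpower_sqrt, Rinv_mult, exp_Ropp by easy.
    assert (0 < sqrt t) by now apply sqrt_lt_R0.
    apply Rmult_le_compat_l; [apply Rlt_le, Rinv_0_lt_compat; lra |].
    apply Rinv_le_contravar; [lra | apply exp_ineq1_le]. }
  assert (Hg : forall t, 0 < t -> continuous g t).
  { intros t Ht. apply (ex_derive_continuous g). unfold g.
    assert (0 < sqrt t) by now apply sqrt_lt_R0.
    auto_derive. repeat split; try easy. apply Rgt_not_eq, Rmult_lt_0_compat; lra. }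
  apply (Gamma_spec_of_bounded (1/2) (2 * PI)); [lra |]. intros a b Ha Hab.
  assert (His : is_RInt g a b (minus (2 * atan (sqrt b)) (2 * atan (sqrt a)))).
  { apply (is_RInt_derive (fun t => 2 * atan (sqrt t))).
    - intros t Ht. assert (0 < t) by (apply (pos_of_Rmin_le a b); lra).
      assert (0 < sqrt t) by now apply sqrt_lt_R0.
      unfold g. auto_derive; [easy|].
      rewrite Rmult_1_r, sqrt_sqrt by lra. field. lra.
    - intros t Ht. apply Hg, (pos_of_Rmin_le a b); lra. }
  apply Rle_trans with (RInt g a b).
  - apply RInt_le; [lra | | | intros t Ht; apply Hle; lra];
      apply ex_RInt_continuous_pos; try lra; auto using Gamma_integrand_continuous.
  - rewrite (is_RInt_unique _ _ _ _ His). unfold minus, plus, opp; simpl.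
    destruct (atan_bound (sqrt b)), (atan_bound (sqrt a)). lra.
Qed.

Lemma Rpower_exp_lim_0 x : 0 < x ->
  filterlim (fun t => Rpower t x * exp (- t)) (at_right 0) (locally 0).
Proof.
  intros Hx. apply filterlim_locally. intros eps.
  assert (Hd : 0 < exp (ln eps / x)) by apply exp_pos.
  exists (mkposreal _ Hd). intros t Ht Htpos. simpl in Ht.
  change (Rabs (t - 0) < exp (ln eps / x)) in Ht.
  change (Rabs (Rpower t x * exp (- t) - 0) < eps).
  assert (0 < Rpower t x) by apply exp_pos.
  assert (0 < exp (- t)) by apply exp_pos.
  rewrite Rminus_0_r, Rabs_pos_eq in Ht by lra.
  rewrite Rminus_0_r, Rabs_pos_eq by (apply Rlt_le, Rmult_lt_0_compat; lra).
  assert (Hpow : Rpower t x < eps).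
  { unfold Rpower. rewrite <- (exp_ln eps) by apply cond_pos.
    apply exp_increasing. apply ln_increasing in Ht; [| easy].
    rewrite ln_exp in Ht. apply Rmult_lt_compat_l with (r := x) in Ht; [| easy].
    replace (x * (ln eps / x)) with (ln eps) in Ht by (field; lra). lra. }
  assert (exp (- t) <= 1) by (rewrite <- exp_0; apply exp_le; lra).
  nra.
Qed.

Lemma Rpower_exp_lim_p_infty x :
  filterlim (fun t => Rpower t x * exp (- t)) (Rbar_locally p_infty) (locally 0).
Proof.
  assert (Hexponent : is_lim (fun t => t * (x * (ln t / t) - 1)) p_infty m_infty).
  { replace m_infty with (Rbar_mult p_infty (x * 0 - 1)).
    2: { simpl. destruct (Rle_dec 0 (x * 0 - 1)); [exfalso; lra | easy]. }
    apply is_lim_mult.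
    - apply is_lim_id.
    - apply (is_lim_minus _ _ _ (x * 0) 1); [| apply is_lim_const | easy].
      exact (is_lim_scal_l _ x _ _ is_lim_div_ln_p).
    - simpl. unfold ex_Rbar_mult. lra. }
  assert (Hlim : is_lim (fun t => Rpower t x * exp (- t)) p_infty 0).
  { apply (is_lim_ext_loc (fun t => exp (t * (x * (ln t / t) - 1)))).
    - exists 0. intros t Ht. unfold Rpower. rewrite <- exp_plus. f_equal. field. lra.
    - apply (is_lim_comp exp _ p_infty 0 m_infty); [apply is_lim_exp_m | exact Hexponent |].
      exists 0. easy. }
  exact Hlim.
Qed.

Lemma is_derive_Rpower_exp x t : 0 < t ->
  is_derive (fun u => Rpower u x * exp (- u)) t
            (x * Gamma_integrand x t - Gamma_integrand (x + 1) t).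
Proof.
  intros Ht. unfold Gamma_integrand. replace (x + 1 - 1) with x by ring.
  assert (Hp : is_derive (fun u => Rpower u x) t (x * Rpower t (x - 1)))
    by now apply is_derive_Reals, derivable_pt_lim_power.
  assert (He : is_derive (fun u => exp (- u)) t (- exp (- t)))
    by (auto_derive; [easy | ring]).
  replace (x * (Rpower t (x - 1) * exp (- t)) - Rpower t x * exp (- t))
    with (plus (mult (x * Rpower t (x - 1)) (exp (- t))) (mult (Rpower t x) (- exp (- t))))
    by (unfold plus, mult; simpl; ring).
  exact (is_derive_mult _ _ _ _ _ Hp He Rmult_comm).
Qed.

(* The primitive [t^x e^(-t)] vanishes at both ends. *)
Lemma is_RInt_gen_Gamma_parts x : 0 < x ->
  is_RInt_gen (fun t => x * Gamma_integrand x t - Gamma_integrand (x + 1) t)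
              (at_right 0) (Rbar_locally p_infty) 0.
Proof.
  intros Hx.
  set (h := fun u => Rpower u x * exp (- u)).
  set (dh := fun t => x * Gamma_integrand x t - Gamma_integrand (x + 1) t).
  assert (HD : forall t, 0 < t -> Derive h t = dh t)
    by (intros t Ht; now apply is_derive_unique, is_derive_Rpower_exp).
  assert (Hdh : forall t, 0 < t -> continuous dh t).
  { intros t Ht. apply (continuous_minus (fun t => x * Gamma_integrand x t)).
    - apply (continuous_scal_r x (Gamma_integrand x)). now apply Gamma_integrand_continuous.
    - now apply Gamma_integrand_continuous. }
  apply (is_RInt_gen_ext (Derive h)).
  { apply (filter_prod_pos (fun a b => forall t, Rmin a b < t < Rmax a b -> Derive h t = dh t)).
    intros a b Ha Hb t Ht. apply HD, (pos_of_Rmin_le a b); lra. }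
  enough (H : is_RInt_gen (Derive h) (at_right 0) (Rbar_locally p_infty) (0 - 0))
    by (rewrite Rminus_0_r in H; exact H).
  apply is_RInt_gen_Derive.
  - apply (filter_prod_pos (fun a b => forall t, Rmin a b <= t <= Rmax a b -> ex_derive h t)).
    intros a b Ha Hb t Ht. exists (dh t).
    apply is_derive_Rpower_exp, (pos_of_Rmin_le a b); tauto.
  - apply (filter_prod_pos
      (fun a b => forall t, Rmin a b <= t <= Rmax a b -> continuous (Derive h) t)).
    intros a b Ha Hb t Ht. assert (Htpos : 0 < t) by (apply (pos_of_Rmin_le a b); tauto).
    apply (continuous_ext_loc (Derive h) dh t); [| now apply Hdh].
    exists (mkposreal t Htpos). intros u Hu. apply Rabs_lt_between' in Hu. simpl in Hu.
    symmetry. apply HD. lra.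
  - now apply Rpower_exp_lim_0.
  - apply Rpower_exp_lim_p_infty.
Qed.

Lemma is_RInt_gen_Gamma_succ x l : 0 < x ->
  is_RInt_gen (Gamma_integrand x) (at_right 0) (Rbar_locally p_infty) l ->
  is_RInt_gen (Gamma_integrand (x + 1)) (at_right 0) (Rbar_locally p_infty) (x * l).
Proof.
  intros Hx Hl.
  assert (Hdiff := is_RInt_gen_minus _ _ _ _ (is_RInt_gen_scal _ x _ Hl)
                                              (is_RInt_gen_Gamma_parts x Hx)).
  replace (x * l) with (minus (scal x l) 0)
    by (unfold minus, plus, opp, scal; simpl; unfold mult; simpl; ring).
  refine (is_RInt_gen_ext _ _ _ _ Hdiff).
  apply (filter_prod_pos (fun a b => forall t, Rmin a b < t < Rmax a b -> _ = _)).
  intros a b _ _ t _. unfold minus, plus, opp, scal; simpl. unfold mult; simpl. ring.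
Qed.

Lemma Gamma_spec_succ x : 0 < x -> Gamma_spec x ->
  Gamma_spec (x + 1) /\ Gamma (x + 1) = x * Gamma x.
Proof.
  intros Hx [Hint Hpos].
  assert (Hsucc := is_RInt_gen_Gamma_succ x _ Hx Hint).
  split.
  - apply (Gamma_spec_intro _ _ Hsucc). now apply Rmult_lt_0_compat.
  - exact (is_RInt_gen_unique _ _ Hsucc).
Qed.

Lemma Gamma_spec_nat k : Gamma_spec (INR (S k)).
Proof.
  induction k as [| k IH]; [exact Gamma_spec_1 |].
  rewrite S_INR. apply Gamma_spec_succ; [apply lt_0_INR; lia | exact IH].
Qed.

Lemma Gamma_spec_half_nat k : Gamma_spec (INR (S k) / 2).
Proof.
  enough (H : Gamma_spec (INR (S k) / 2) /\ Gamma_spec (INR (S (S k)) / 2)) by exact (proj1 H).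
  induction k as [| k [IH IH']].
  - split.
    + replace (INR 1 / 2) with (1 / 2) by (simpl; field). exact Gamma_spec_half.
    + replace (INR 2 / 2) with 1 by (simpl; field). exact Gamma_spec_1.
  - split; [exact IH' |].
    replace (INR (S (S (S k))) / 2) with (INR (S k) / 2 + 1) by (rewrite !S_INR; field).
    apply Gamma_spec_succ; [| exact IH].
    assert (0 < INR (S k)) by (apply lt_0_INR; lia). lra.
Qed.

Definition sin_cos_pow (a b : nat) (t : R) : R := sin t ^ a * cos t ^ b.

Definition wallis (a b : nat) : R := RInt (sin_cos_pow a b) 0 (PI / 2).

Lemma sin_cos_pow_continuous a b t : continuous (sin_cos_pow a b) t.
Proof. apply (ex_derive_continuous (sin_cos_pow a b)). unfold sin_cos_pow. now auto_derive. Qed.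

Lemma ex_RInt_sin_cos_pow a b : ex_RInt (sin_cos_pow a b) 0 (PI / 2).
Proof.
  apply (ex_RInt_continuous (V := R_CompleteNormedModule)).
  intros t _. apply sin_cos_pow_continuous.
Qed.

Lemma sin_cos_pos t : 0 < t < PI / 2 -> 0 < sin t /\ 0 < cos t.
Proof.
  intros Ht. assert (PI_RGT_0 := PI_RGT_0).
  split; [apply sin_gt_0 | apply cos_gt_0]; lra.
Qed.

Lemma sin_cos_pow_nonneg a b t : 0 < t < PI / 2 -> 0 <= sin_cos_pow a b t.
Proof.
  intros Ht. destruct (sin_cos_pos t Ht).
  apply Rmult_le_pos; apply pow_le; lra.
Qed.

Lemma wallis_nonneg a b : 0 <= wallis a b.
Proof.
  apply RInt_ge_0; [assert (PI_RGT_0 := PI_RGT_0); lra | apply ex_RInt_sin_cos_pow |].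
  apply sin_cos_pow_nonneg.
Qed.

Lemma wallis_succ_le a b : wallis (S a) b <= wallis a b.
Proof.
  apply RInt_le; [assert (PI_RGT_0 := PI_RGT_0); lra | apply ex_RInt_sin_cos_pow.. |].
  intros t Ht. destruct (sin_cos_pos t Ht). assert (sin t <= 1) by apply SIN_bound.
  assert (0 <= sin_cos_pow a b t) by now apply sin_cos_pow_nonneg.
  unfold sin_cos_pow in *. simpl. nra.
Qed.

Lemma wallis_split a b : wallis a b = wallis (S (S a)) b + wallis a (S (S b)).
Proof.
  unfold wallis.
  rewrite <- (RInt_plus (V := R_CompleteNormedModule)) by apply ex_RInt_sin_cos_pow.
  apply RInt_ext. intros t _. unfold sin_cos_pow, plus; simpl.
  rewrite <- (Rmult_1_r (sin t ^ a * cos t ^ b)) at 1. rewrite <- (sin2_cos2 t).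
  unfold Rsqr. ring.
Qed.

Lemma wallis_parts a b : (INR a + 1) * wallis a (S (S b)) = (INR b + 1) * wallis (S (S a)) b.
Proof.
  set (F := fun t => sin t ^ S a * cos t ^ S b).
  assert (HF : is_RInt (fun t => (INR a + 1) * sin_cos_pow a (S (S b)) t
                                  - (INR b + 1) * sin_cos_pow (S (S a)) b t)
                       0 (PI / 2) (minus (F (PI / 2)) (F 0))).
  { apply (is_RInt_derive F).
    - intros t _. unfold F, sin_cos_pow. auto_derive; [easy |].
      change (match a with 0%nat => 1 | S _ => INR a + 1 end) with (INR (S a)).
      change (match b with 0%nat => 1 | S _ => INR b + 1 end) with (INR (S b)).
      rewrite !S_INR. simpl. ring.
    - intros t _. apply (ex_derive_continuous (fun t => (INR a + 1) * sin_cos_pow a (S (S b)) t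
                                  - (INR b + 1) * sin_cos_pow (S (S a)) b t)).
      unfold sin_cos_pow. now auto_derive. }
  assert (HF0 : minus (F (PI / 2)) (F 0) = 0)
    by (unfold F, minus, plus, opp; simpl; rewrite cos_PI2, sin_0; ring).
  assert (Hlin : is_RInt (fun t => (INR a + 1) * sin_cos_pow a (S (S b)) t
                                 - (INR b + 1) * sin_cos_pow (S (S a)) b t) 0 (PI / 2)
                   ((INR a + 1) * wallis a (S (S b)) - (INR b + 1) * wallis (S (S a)) b)).
  { apply (is_RInt_minus (V := R_CompleteNormedModule));
      apply (is_RInt_scal (V := R_CompleteNormedModule)), RInt_correct, ex_RInt_sin_cos_pow. }
  rewrite HF0 in HF.
  assert (E := is_RInt_unique (V := R_CompleteNormedModule) _ _ _ _ HF).
  rewrite (is_RInt_unique (V := R_CompleteNormedModule) _ _ _ _ Hlin) in E.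
  lra.
Qed.

Lemma wallis_reduce a b : (INR a + INR b + 2) * wallis (S (S a)) b = (INR a + 1) * wallis a b.
Proof. rewrite (wallis_split a b). assert (H := wallis_parts a b). lra. Qed.

Lemma wallis_half_le a b : (b <= a)%nat -> / 2 * wallis a b <= wallis (S a) b.
Proof.
  intros Hab. apply Rle_trans with (wallis (S (S a)) b); [| apply wallis_succ_le].
  assert (H := wallis_reduce a b). assert (H0 := wallis_nonneg a b).
  assert (INR b <= INR a) by now apply le_INR.
  assert (0 <= INR b) by apply pos_INR.
  apply Rmult_le_reg_l with (INR a + INR b + 2); [lra |]. nra.
Qed.

Lemma wallis_shift_bounds b j : (/ 2) ^ j * wallis b b <= wallis (b + j) b <= wallis b b.
Proof.
  induction j as [| j [IHlo IHhi]].
  - rewrite Nat.add_0_r. simpl. lra.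
  - rewrite Nat.add_succ_r.
    assert (H := wallis_half_le (b + j) b ltac:(lia)).
    assert (H' := wallis_succ_le (b + j) b).
    simpl. split; nra.
Qed.

Lemma wallis_diag_SS k : wallis (S (S k)) (S (S k)) = (INR k + 1) / (4 * (INR k + 2)) * wallis k k.
Proof.
  assert (H1 := wallis_reduce k (S (S k))). assert (H2 := wallis_parts k k).
  assert (H3 := wallis_split k k). rewrite !S_INR in H1. assert (0 <= INR k) by apply pos_INR.
  apply Rmult_eq_reg_l with (4 * (INR k + 2)); [| lra].
  field_simplify; [nra | lra].
Qed.

Lemma wallis_0_0 : wallis 0 0 = PI / 2.
Proof.
  unfold wallis, sin_cos_pow. rewrite (RInt_ext _ (fun _ => 1)) by (intros; simpl; ring).
  rewrite RInt_const. unfold scal; simpl. unfold mult; simpl. ring.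
Qed.

Lemma wallis_1_1 : wallis 1 1 = / 2.
Proof.
  apply is_RInt_unique.
  replace (/ 2) with (minus (sin (PI / 2) ^ 2 / 2) (sin 0 ^ 2 / 2))
    by (rewrite sin_PI2, sin_0; unfold minus, plus, opp; simpl; field).
  apply (is_RInt_derive (fun t => sin t ^ 2 / 2)).
  - intros t _. unfold sin_cos_pow. auto_derive; [easy | simpl; field].
  - intros t _. apply sin_cos_pow_continuous.
Qed.

(* By the Beta integral this equals [1/2] for every [k]; proving that would need
   [Gamma (1/2) = sqrt PI], but periodicity and positivity are enough here. *)
Definition jpep_const (k : nat) : R :=
  Gamma (INR (S k)) / Gamma (INR (S k) / 2) ^ 2 * wallis k k.

Lemma Gamma_nat_pos k : 0 < Gamma (INR (S k)).
Proof. apply Gamma_spec_nat. Qed.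

Lemma Gamma_half_nat_pos k : 0 < Gamma (INR (S k) / 2).
Proof. apply Gamma_spec_half_nat. Qed.

Lemma Gamma_nat_SS k :
  Gamma (INR (S (S (S k)))) = INR (S (S k)) * INR (S k) * Gamma (INR (S k)).
Proof.
  assert (Hsucc : forall j, Gamma (INR (S (S j))) = INR (S j) * Gamma (INR (S j))).
  { intros j. rewrite (S_INR (S j)).
    apply Gamma_spec_succ; [apply lt_0_INR; lia | apply Gamma_spec_nat]. }
  rewrite Hsucc, Hsucc. ring.
Qed.

Lemma Gamma_half_nat_SS k : Gamma (INR (S (S (S k))) / 2) = INR (S k) / 2 * Gamma (INR (S k) / 2).
Proof.
  replace (INR (S (S (S k))) / 2) with (INR (S k) / 2 + 1) by (rewrite !S_INR; field).
  apply Gamma_spec_succ; [| apply Gamma_spec_half_nat].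
  assert (0 < INR (S k)) by (apply lt_0_INR; lia). lra.
Qed.

Lemma jpep_const_SS k : jpep_const (S (S k)) = jpep_const k.
Proof.
  unfold jpep_const. rewrite wallis_diag_SS, Gamma_nat_SS, Gamma_half_nat_SS.
  assert (H1 := Gamma_nat_pos k). assert (H2 := Gamma_half_nat_pos k).
  assert (0 <= INR k) by apply pos_INR.
  rewrite !S_INR in *. field. split; [| split]; lra.
Qed.

Lemma jpep_const_cases k : jpep_const k = jpep_const 0 \/ jpep_const k = jpep_const 1.
Proof.
  enough (H : forall j, (jpep_const j = jpep_const 0 \/ jpep_const j = jpep_const 1) /\
                        (jpep_const (S j) = jpep_const 0 \/ jpep_const (S j) = jpep_const 1))
    by exact (proj1 (H k)).
  induction j as [| j [IH IH']]; [split; [now left | now right] |].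
  split; [exact IH' |]. rewrite jpep_const_SS. exact IH.
Qed.

Lemma jpep_const_pos k : 0 < jpep_const k.
Proof.
  assert (Hpos : forall j, 0 < wallis j j -> 0 < jpep_const j).
  { intros j Hw. apply Rmult_lt_0_compat; [| exact Hw].
    apply Rdiv_lt_0_compat; [apply Gamma_nat_pos | apply pow_lt, Gamma_half_nat_pos]. }
  destruct (jpep_const_cases k) as [-> | ->]; apply Hpos.
  - rewrite wallis_0_0. assert (PI_RGT_0 := PI_RGT_0). lra.
  - rewrite wallis_1_1. lra.
Qed.

Lemma Rpower_add_bounds A B e : 0 < A -> 0 <= B -> 0 <= e ->
  Rpower A e <= Rpower (A + B) e <= Rpower A e * exp (e * B / A).
Proof.
  intros HA HB He. split; [apply Rle_Rpower_l; lra |].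
  assert (HBA : 0 <= B / A) by (apply Rdiv_le_0_compat; lra).
  replace (A + B) with (A * (1 + B / A)) by (field; lra).
  rewrite <- Rpower_mult_distr by lra.
  apply Rmult_le_compat_l; [apply Rlt_le, exp_pos |].
  assert (Hln : ln (1 + B / A) <= B / A)
    by (rewrite <- (ln_exp (B / A)) at 2; apply ln_le; [lra | apply exp_ineq1_le]).
  unfold Rpower. apply exp_le. unfold Rdiv in *. rewrite Rmult_assoc.
  now apply Rmult_le_compat_l.
Qed.

Lemma Rpower_ratio_bounds q p e1 e0 s : 0 < q -> 0 < p -> 0 <= e1 -> 0 <= e0 -> 0 <= s <= 1 ->
  Rpower q e1 / Rpower p e0 * exp (- (e0 / p)) <= Rpower (q + s) e1 / Rpower (p + s) e0
  <= Rpower q e1 / Rpower p e0 * exp (e1 / q).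
Proof.
  intros Hq Hp He1 He0 Hs.
  destruct (Rpower_add_bounds q s e1) as [Hq1 Hq2]; try lra.
  destruct (Rpower_add_bounds p s e0) as [Hp1 Hp2]; try lra.
  assert (0 <= e1 / q) by (apply Rdiv_le_0_compat; lra).
  assert (0 <= e0 / p) by (apply Rdiv_le_0_compat; lra).
  assert (exp (e1 * s / q) <= exp (e1 / q))
    by (apply exp_le; replace (e1 * s / q) with (e1 / q * s) by (field; lra); nra).
  assert (exp (e0 * s / p) <= exp (e0 / p))
    by (apply exp_le; replace (e0 * s / p) with (e0 / p * s) by (field; lra); nra).
  assert (0 < Rpower q e1) by apply exp_pos.
  assert (0 < Rpower p e0) by apply exp_pos.
  assert (0 < exp (e0 / p)) by apply exp_pos.
  assert (0 < exp (e1 / q)) by apply exp_pos.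
  rewrite exp_Ropp. split.
  - replace (Rpower q e1 / Rpower p e0 * / exp (e0 / p))
      with (Rpower q e1 / (Rpower p e0 * exp (e0 / p))) by (field; lra).
    unfold Rdiv. apply Rmult_le_compat; try lra.
    + apply Rlt_le, Rinv_0_lt_compat, Rmult_lt_0_compat; lra.
    + apply Rinv_le_contravar; [lra | nra].
  - replace (Rpower q e1 / Rpower p e0 * exp (e1 / q))
      with (Rpower q e1 * exp (e1 / q) / Rpower p e0) by (field; lra).
    unfold Rdiv. apply Rmult_le_compat; try lra.
    + apply Rlt_le, Rinv_0_lt_compat; lra.
    + nra.
    + apply Rinv_le_contravar; lra.
Qed.

Lemma RInt_sandwich (f g : R -> R) (a b lo hi : R) : a <= b ->
  ex_RInt f a b -> ex_RInt g a b ->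
  (forall t, a < t < b -> lo * g t <= f t <= hi * g t) ->
  lo * RInt g a b <= RInt f a b <= hi * RInt g a b.
Proof.
  intros Hab Hf Hg Hfg.
  assert (Hscal : forall m, m * RInt g a b = RInt (fun t => m * g t) a b)
    by (intros m; symmetry; exact (RInt_scal g a b m Hg)).
  assert (Hex : forall m, ex_RInt (fun t => m * g t) a b)
    by (intros m; exact (ex_RInt_scal g a b m Hg)).
  rewrite !Hscal. split; apply RInt_le; auto; intros t Ht; apply Hfg, Ht.
Qed.

Lemma RInt_jpep_integrand_bounds (a b : nat) (q p e1 e0 : R) :
  0 < q -> 0 < p -> 0 <= e1 -> 0 <= e0 ->
  Rpower q e1 / Rpower p e0 * exp (- (e0 / p)) * wallis a b <=
  RInt (fun phi => sin phi ^ a * cos phi ^ b * Rpower (q + sin phi ^ 2) e1 /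
                   Rpower (p + sin phi ^ 2) e0) 0 (PI / 2) <=
  Rpower q e1 / Rpower p e0 * exp (e1 / q) * wallis a b.
Proof.
  intros Hq Hp He1 He0.
  apply RInt_sandwich; [assert (PI_RGT_0 := PI_RGT_0); lra | | apply ex_RInt_sin_cos_pow |].
  - apply (ex_RInt_continuous (V := R_CompleteNormedModule)). intros t _.
    apply (ex_derive_continuous (fun phi => sin phi ^ a * cos phi ^ b *
      Rpower (q + sin phi ^ 2) e1 / Rpower (p + sin phi ^ 2) e0)).
    assert (0 <= sin t ^ 2) by (rewrite <- Rsqr_pow2; apply Rle_0_sqr).
    auto_derive. repeat split; try apply ex_derive_Rpower_l; try lra.
    apply Rgt_not_eq, exp_pos.
  - intros t Ht. assert (Hw := sin_cos_pow_nonneg a b t Ht).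
    assert (Hs : 0 <= sin t ^ 2 <= 1).
    { rewrite <- Rsqr_pow2. split; [apply Rle_0_sqr |].
      assert (H := sin2_cos2 t). assert (0 <= (cos t)²) by apply Rle_0_sqr. lra. }
    destruct (Rpower_ratio_bounds q p e1 e0 (sin t ^ 2) Hq Hp He1 He0 Hs) as [Hlo Hhi].
    unfold sin_cos_pow in *.
    replace (sin t ^ a * cos t ^ b * Rpower (q + sin t ^ 2) e1 / Rpower (p + sin t ^ 2) e0)
      with ((Rpower (q + sin t ^ 2) e1 / Rpower (p + sin t ^ 2) e0) * (sin t ^ a * cos t ^ b))
      by (unfold Rdiv; ring).
    split; apply Rmult_le_compat_r; lra.
Qed.

Definition jpep_leading (n d0 d : nat) (r : R) : R :=
  2 * jpep_const (n - d - 1) *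
  (Rpower (INR n) ((INR n - INR d) / 2) / Rpower (INR n * r) ((INR n - INR d0) / 2)).

Lemma jpep_leading_pos n d0 d r : 0 < jpep_leading n d0 d r.
Proof.
  assert (H := jpep_const_pos (n - d - 1)).
  apply Rmult_lt_0_compat; [lra |]. apply Rdiv_lt_0_compat; apply exp_pos.
Qed.

Lemma ln_jpep_leading n d0 d r : (0 < n)%nat -> 0 < r ->
  ln (jpep_leading n d0 d r) = ln 2 + ln (jpep_const (n - d - 1))
    - (INR d - INR d0) / 2 * ln (INR n) - (INR n - INR d0) / 2 * ln r.
Proof.
  intros Hn Hr. assert (0 < INR n) by now apply lt_0_INR.
  assert (Hc := jpep_const_pos (n - d - 1)).
  set (X := Rpower (INR n) ((INR n - INR d) / 2)).
  set (Y := Rpower (INR n * r) ((INR n - INR d0) / 2)).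
  assert (0 < X /\ 0 < Y) as [HX HY] by (split; apply exp_pos).
  unfold jpep_leading. fold X Y.
  rewrite ln_mult, ln_mult, ln_div by (try apply Rdiv_lt_0_compat; lra).
  unfold X, Y. rewrite !ln_Rpower, ln_mult by lra.
  lra.
Qed.

Lemma RInt_jpep_integrand_diag_bounds (k a : nat) (q p e1 e0 : R) :
  0 < q -> 0 < p -> 0 <= e1 -> 0 <= e0 ->
  (/ 2) ^ a * exp (- (e0 / p)) * (Rpower q e1 / Rpower p e0) * wallis k k <=
  RInt (fun phi => sin phi ^ (k + a) * cos phi ^ k * Rpower (q + sin phi ^ 2) e1 /
                   Rpower (p + sin phi ^ 2) e0) 0 (PI / 2) <=
  exp (e1 / q) * (Rpower q e1 / Rpower p e0) * wallis k k.
Proof.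
  intros Hq Hp He1 He0.
  destruct (RInt_jpep_integrand_bounds (k + a) k q p e1 e0 Hq Hp He1 He0) as [Hlo Hhi].
  destruct (wallis_shift_bounds k a) as [Hwlo Hwhi].
  set (P := Rpower q e1 / Rpower p e0) in *.
  assert (0 < P) by (apply Rdiv_lt_0_compat; apply exp_pos).
  assert (0 < exp (- (e0 / p))) by apply exp_pos.
  assert (0 < exp (e1 / q)) by apply exp_pos.
  split.
  - apply Rle_trans with (2 := Hlo).
    replace ((/ 2) ^ a * exp (- (e0 / p)) * P * wallis k k)
      with (P * exp (- (e0 / p)) * ((/ 2) ^ a * wallis k k)) by ring.
    apply Rmult_le_compat_l; [nra | exact Hwlo].
  - apply Rle_trans with (1 := Hhi).
    replace (exp (e1 / q) * P * wallis k k) with (P * exp (e1 / q) * wallis k k) by ring.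
    apply Rmult_le_compat_l; [nra | exact Hwhi].
Qed.

(* With [k = n - d - 1] and [a = d - d0] the integrand of [BF_JPEP_0] is that of
   [RInt_jpep_integrand_diag_bounds]; its exponents divided by [n] resp. [n r] are at most
   [1/2] resp. [1/(2c)]. *)
Lemma BF_JPEP_0_bounds n d0 d rho0 rho c :
  (d0 < d)%nat -> (d < n)%nat -> 0 < c -> c <= rho / rho0 <= 1 ->
  (/ 2) ^ (d - d0) * exp (- / (2 * c)) * jpep_leading n d0 d (rho / rho0)
    <= BF_JPEP_0 n d0 d rho0 rho <=
  exp (/ 2) * jpep_leading n d0 d (rho / rho0).
Proof.
  intros Hd Hn Hc Hr.
  set (k := (n - d - 1)%nat). set (a := (d - d0)%nat). set (r := rho / rho0) in *.
  set (q := INR n).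
  assert (Hk : q - INR d = INR (S k))
    by (unfold q, k; rewrite <- minus_INR by lia; f_equal; lia).
  assert (Hdq : INR d0 < INR d < q) by (split; now apply lt_INR).
  assert (0 <= INR d0) by apply pos_INR.
  set (e1 := INR (S k) / 2). set (e0 := (q - INR d0) / 2).
  assert (He1 : 0 <= e1 <= q / 2) by (unfold e1; rewrite <- Hk; lra).
  assert (He0 : 0 <= e0 <= q / 2) by (unfold e0; lra).
  assert (Hqr : 0 < q * r) by (apply Rmult_lt_0_compat; lra).
  assert (Hexp_lo : exp (- / (2 * c)) <= exp (- (e0 / (q * r)))).
  { apply exp_le, Ropp_le_contravar, Rle_div_l; [lra |].
    replace (/ (2 * c) * (q * r)) with (q / 2 * (r / c)) by (field; lra).
    assert (1 <= r / c) by (apply Rle_div_r; lra). nra. }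
  assert (Hexp_hi : exp (e1 / q) <= exp (/ 2)) by (apply exp_le, Rle_div_l; lra).
  destruct (RInt_jpep_integrand_diag_bounds k a q (q * r) e1 e0) as [Hlo Hhi]; try lra.
  unfold BF_JPEP_0, jpep_leading. fold q k. rewrite Hk. fold e1 e0.
  replace (n - d0 - 1)%nat with (k + a)%nat by (unfold k, a; lia).
  set (G := Gamma (INR (S k)) / Gamma e1 ^ 2).
  assert (HG : 0 < G).
  { apply Rdiv_lt_0_compat; [apply Gamma_nat_pos | apply pow_lt, Gamma_half_nat_pos]. }
  replace (jpep_const k) with (G * wallis k k) by reflexivity.
  replace (2 * Gamma (INR (S k)) / Gamma e1 ^ 2) with (2 * G) by (unfold G, Rdiv; ring).
  set (P := Rpower q e1 / Rpower (q * r) e0) in *.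
  assert (0 < P) by (apply Rdiv_lt_0_compat; apply exp_pos).
  assert (0 <= (/ 2) ^ a) by (apply pow_le; lra).
  assert (0 <= wallis k k) by apply wallis_nonneg.
  set (I := RInt _ 0 (PI / 2)) in *.
  assert (0 < 2 * G * P) by (apply Rmult_lt_0_compat; lra).
  assert (0 <= 2 * G * P * wallis k k) by (apply Rmult_le_pos; lra).
  assert (0 <= (/ 2) ^ a * (2 * G * P * wallis k k)) by (apply Rmult_le_pos; lra).
  split; nra.
Qed.

Lemma ratio_bounds rho0 rho c : 0 < rho0 -> c * rho0 <= rho <= rho0 -> c <= rho / rho0 <= 1.
Proof. intros H0 [Hlo Hhi]. split; [apply Rle_div_r | apply Rle_div_l]; lra. Qed.

Lemma ln_ratio_bounds rho0 rho c : 0 < c -> 0 < rho0 -> c * rho0 <= rho <= rho0 ->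
  ln c <= ln (rho / rho0) <= 0.
Proof.
  intros Hc H0 Hrho. destruct (ratio_bounds rho0 rho c H0 Hrho) as [Hlo Hhi].
  split; [now apply ln_le | rewrite <- ln_1; apply ln_le; lra].
Qed.

Lemma ln_jpep_const_bound k :
  Rabs (ln (jpep_const k)) <= Rabs (ln (jpep_const 0)) + Rabs (ln (jpep_const 1)).
Proof.
  assert (0 <= Rabs (ln (jpep_const 0))) by apply Rabs_pos.
  assert (0 <= Rabs (ln (jpep_const 1))) by apply Rabs_pos.
  destruct (jpep_const_cases k) as [-> | ->]; lra.
Qed.

Lemma ln_BF_JPEP_0_bounded d0 d c : (d0 < d)%nat -> 0 < c ->
  exists K, forall n rho0 rho, (d < n)%nat -> 0 < rho0 -> c * rho0 <= rho <= rho0 ->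
  0 < BF_JPEP_0 n d0 d rho0 rho /\
  Rabs (ln (BF_JPEP_0 n d0 d rho0 rho) + (INR d - INR d0) / 2 * ln (INR n)
        + (INR n - INR d0) / 2 * ln (rho / rho0)) <= K.
Proof.
  intros Hd Hc.
  exists (ln 2 + / 2 + / (2 * c) + INR (d - d0) * ln 2
          + Rabs (ln (jpep_const 0)) + Rabs (ln (jpep_const 1))).
  intros n rho0 rho Hn H0 Hrho.
  assert (Hr := ratio_bounds rho0 rho c H0 Hrho).
  destruct (BF_JPEP_0_bounds n d0 d rho0 rho c Hd Hn Hc Hr) as [Hlo Hhi].
  set (L := jpep_leading n d0 d (rho / rho0)) in *.
  assert (HL : 0 < L) by apply jpep_leading_pos.
  assert (Hfac : 0 < (/ 2) ^ (d - d0) * exp (- / (2 * c)))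
    by (apply Rmult_lt_0_compat; [apply pow_lt; lra | apply exp_pos]).
  assert (HB : 0 < BF_JPEP_0 n d0 d rho0 rho) by nra.
  split; [exact HB |].
  apply ln_le in Hlo; [| nra]. apply ln_le in Hhi; [| exact HB].
  rewrite !ln_mult, ln_pow, ln_Rinv, ln_exp in Hlo by (try apply pow_lt; try apply exp_pos; lra).
  rewrite ln_mult, ln_exp in Hhi by (try apply exp_pos; lra).
  unfold L in Hlo, Hhi.
  rewrite ln_jpep_leading in Hlo, Hhi by (lia || lra).
  assert (Hjc := ln_jpep_const_bound (n - d - 1)). apply Rabs_le_between in Hjc.
  assert (0 < ln 2) by (rewrite <- ln_1; apply ln_increasing; lra).
  assert (0 <= INR (d - d0) * ln 2) by (apply Rmult_le_pos; [apply pos_INR | lra]).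
  assert (0 < / (2 * c)) by (apply Rinv_0_lt_compat; lra).
  apply Rabs_le_between. lra.
Qed.

Lemma BIC_sub n dl dk r0 rl rk : 0 < r0 -> 0 < rl -> 0 < rk ->
  BIC n dl rl - BIC n dk rk =
  INR n * (ln (rl / r0) - ln (rk / r0)) + (INR dl - INR dk) * ln (INR n).
Proof. intros H0 Hl Hk. unfold BIC. rewrite !ln_div by assumption. ring. Qed.

Theorem theorem1 (d0 dl dk : nat) (c : R) (rss0 rssl rssk : nat -> R) :
  (d0 < dl)%nat -> (d0 < dk)%nat -> 0 < c ->
  (forall n, 0 < rss0 n) ->
  (forall n, c * rss0 n <= rssl n <= rss0 n) ->
  (forall n, c * rss0 n <= rssk n <= rss0 n) ->
  exists (C : R) (N : nat), forall n : nat, (N <= n)%nat ->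
    Rabs (- 2 * ln (BF_JPEP n d0 dl dk (rss0 n) (rssl n) (rssk n))
          - (BIC n dl (rssl n) - BIC n dk (rssk n))) <= C.
Proof.
  intros Hl Hk Hc H0 Hrl Hrk.
  destruct (ln_BF_JPEP_0_bounded d0 dl c Hl Hc) as [Kl HKl].
  destruct (ln_BF_JPEP_0_bounded d0 dk c Hk Hc) as [Kk HKk].
  exists (2 * Kl + 2 * Kk - INR d0 * ln c), (S (Nat.max dl dk)).
  intros n Hn.
  destruct (HKl n (rss0 n) (rssl n) ltac:(lia) (H0 n) (Hrl n)) as [Bl Al].
  destruct (HKk n (rss0 n) (rssk n) ltac:(lia) (H0 n) (Hrk n)) as [Bk Ak].
  apply Rabs_le_between in Al, Ak.
  assert (0 < rssl n) by (destruct (Hrl n); specialize (H0 n); nra).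
  assert (0 < rssk n) by (destruct (Hrk n); specialize (H0 n); nra).
  destruct (ln_ratio_bounds _ _ c Hc (H0 n) (Hrl n)).
  destruct (ln_ratio_bounds _ _ c Hc (H0 n) (Hrk n)).
  assert (0 <= INR d0) by apply pos_INR.
  assert (INR d0 * ln c <= INR d0 * ln (rssl n / rss0 n) <= 0)
    by (split; [apply Rmult_le_compat_l | apply Rmult_le_0_l]; lra).
  assert (INR d0 * ln c <= INR d0 * ln (rssk n / rss0 n) <= 0)
    by (split; [apply Rmult_le_compat_l | apply Rmult_le_0_l]; lra).
  unfold BF_JPEP. rewrite ln_div, (BIC_sub n dl dk (rss0 n)) by easy.
  apply Rabs_le_between. lra.
Qed.
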